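(* Let $N\ge 2$ be an integer, let $\gamma>0$, $\upsilon\in(0,1]$, $P_b>0$, $h>0$, $T>0$, and let $p_1>p_2>\cdots>p_N>0$ with $p_1\le1$. Consider Problem P3: minimize $\sum_{k=1}^N \gamma p_k f_k^2$ over $(f_1,\dots,f_N,y_1,\dots,y_N)$ subject to $\sum_{k=1}^N \gamma f_k^2 \le \upsilon P_b h \sum_{k=1}^N y_k$, $\sum_{k=1}^N y_k\le T$, and $f_k>0$, $\frac{1}{f_k}-y_k\le 0$ for all $k$, and let $\bar E^*_{\mathrm{loc}}$ denote its optimal value (the minimum average energy consumption). Define $a=\frac{\gamma N^3}{\upsilon T^3}$ and $a'=\frac{\gamma}{\upsilon T^3}\left(\sum_{k=1}^N p_k^{1/3}\right)^2\left(\sum_{k=1}^N p_k^{-2/3}\right)$. Then: (1) if $a< P_bh<a'$, $$\bar E^*_{\mathrm{loc}}=\frac{\gamma}{T^2}\left[\sum_{k=1}^N(p_k+\lambda)^{1/3}\right]^2\left[\sum_{k=1}^N p_k(p_k+\lambda)^{-2/3}\right],$$ where $\lambda>0$ satisfies $\left[\sum_{k=1}^N (p_k+\lambda)^{1/3}\right]^2\left[\sum_{k=1}^N (p_k+\lambda)^{-2/3}\right]=\frac{\upsilon P_bhT^3}{\gamma}$; if $P_bh=a$, $\bar E^*_{\mathrm{loc}}=\frac{\gamma N^2}{T^2}\sum_{k=1}^N p_k$; moreover, on $a\le P_bh<a'$, $\bar E^*_{\mathrm{loc}}$ is a monotone decreasing function of $P_bh$ and $$\frac{\gamma}{T^2}\left(\sum_{k=1}^N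 p_k^{1/3}\right)^3<\bar E^*_{\mathrm{loc}}\le\frac{\gamma N^2}{T^2}\sum_{k=1}^N p_k;$$ (2) if $P_bh\ge a'$, $\bar E^*_{\mathrm{loc}}=\frac{\gamma}{T^2}\left(\sum_{k=1}^N p_k^{1/3}\right)^3$, which is independent of $P_bh$.
   Context: $f_k$ is the CPU frequency of the $k$-th cycle, $p_k$ the probability that the $k$-th cycle is executed, $\gamma f^2$ the energy per cycle at frequency $f$, $\upsilon P_b h$ the harvested power and $T$ the deadline. *)

From HB Require Import structures.
From mathcomp Require Import all_boot all_order all_algebra.
From mathcomp Require Import all_classical all_reals exp.
Set Implicit Arguments. Unset Strict Implicit. Unset Printing Implicit Defensive.
Import Order.TTheory GRing.Theory Num.Theory.
Local Open Scope classical_set_scope.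
Local Open Scope ring_scope.

(* Indices k = 1..N of the paper are represented by k = 0..N-1. *)

(* Feasible set of Problem P3 (c stands for P_b * h). *)
Definition P3_feasible {R : realType} (N : nat) (gamma upsilon c T : R)
    (f y : nat -> R) : Prop :=
  (\sum_(k < N) gamma * f k ^+ 2 <= upsilon * c * \sum_(k < N) y k) /\
  (\sum_(k < N) y k <= T) /\
  (forall k, (k < N)%N -> 0 < f k /\ 1 / f k - y k <= 0).

Definition P3_objective {R : realType} (N : nat) (gamma : R) (p f : nat -> R) : R :=
  \sum_(k < N) gamma * p k * f k ^+ 2.

Definition E_loc_opt {R : realType} (N : nat) (gamma upsilon c T : R)
    (p : nat -> R) : R :=
  inf [set e | exists f y, P3_feasible N gamma upsilon c T f y /\
                          e = P3_objective N gamma p f].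

Definition a_thr {R : realType} (N : nat) (gamma upsilon T : R) : R :=
  gamma * (N%:R) ^+ 3 / (upsilon * T ^+ 3).

Definition a'_thr {R : realType} (N : nat) (gamma upsilon T : R) (p : nat -> R) : R :=
  gamma / (upsilon * T ^+ 3) * (\sum_(k < N) powR (p k) (1/3)) ^+ 2
    * (\sum_(k < N) powR (p k) (-(2/3))).

From HB Require Import structures.
From mathcomp Require Import all_boot all_order all_algebra.
From mathcomp Require Import all_classical all_reals exp.
From mathcomp Require Import topology normedtype derive realfun.
From mathcomp Require Import ring lra zify.
Import Order.TTheory GRing.Theory Num.Theory.
Import numFieldNormedType.Exports.
Local Open Scope classical_set_scope.
Local Open Scope ring_scope.
Set Implicit Arguments. Unset Strict Implicit. Unset Printing Implicit Defensive.

(* Eliminating the times [y k], Problem P3 asks to minimise [gamma \sum p_k f_k^2]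
   subject to [\sum 1/f_k <= T] and [gamma \sum f_k^2 <= upsilon c T], with
   [c = P_b h].  Everything rests on the inequality
   [(\sum q_k)^3 / T^2 <= \sum q_k^3 f_k^2] for [\sum 1/f_k <= T], with equality iff
   [q_k f_k] is constant: with [q_k = w_k^(1/3)] it says that [f_k ~ w_k^(-1/3)]
   minimises [\sum w_k f_k^2].  For [w = p] this profile needs the energy
   [upsilon a' T], which gives (2).  For [a < c < a'] a multiplier [lam > 0] for the
   energy constraint reduces the problem to weights [p_k + lam]; the intermediate
   value theorem picks [lam] so that the minimiser spends exactly the budget.  At
   [c = a] the budget forces the equality case with unit weights, [f_k = N/T].
   Monotonicity comes from convexity: mixing an optimum at [c1] with the
   minimiser for [w = p] yields a strictly better point admissible at any
   [c2 in (c1, a')]. *)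

Section CubeRoot.
Variable R : realType.

Lemma powR13_expr3 (x : R) : 0 <= x -> powR x (1/3) ^+ 3 = x.
Proof.
move=> x_ge0; rewrite -powR_mulrn ?powR_ge0 // -powRrM.
have -> : (1/3 * 3%:R : R) = 1 by field.
by rewrite powRr1.
Qed.

Lemma powRN23 (x : R) : powR x (-(2/3)) = (powR x (1/3) ^+ 2)^-1.
Proof.
rewrite powRN -powR_mulrn ?powR_ge0 // -powRrM.
by have -> : (1/3 * 2%:R : R) = 2/3 by field.
Qed.

Lemma continuous_powR_shift (c r x : R) :
  0 < c + x -> {for x, continuous (fun l => powR (c + l) r)}.
Proof.
move=> cx_gt0.
have shift_cont : {for x, continuous (fun l : R => c + l)}.
  exact: (@cvgD R R _ _ _ _ _ _ _ (cvg_cst c) cvg_id).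
have powR_cont : {for c + x, continuous (fun a : R => powR a r)}.
  apply/differentiable_continuous/derivable1_diffP/derivable_powR.
  by rewrite in_itv /= cx_gt0.
exact: (continuous_comp shift_cont powR_cont).
Qed.

End CubeRoot.

Section CubeSum.
Variables (R : realFieldType) (n : nat) (T : R) (q f : nat -> R).
Hypotheses (T_gt0 : 0 < T) (q_ge0 : forall k, (k < n)%N -> 0 <= q k)
  (f_gt0 : forall k, (k < n)%N -> 0 < f k) (sum_inv_f : \sum_(k < n) 1 / f k <= T).

Lemma cube_sum_gap_ge0 (m : R) k : (k < n)%N -> 0 <= m ->
  0 <= (q k * f k - m) ^+ 2 * (q k * f k + 2 * m) / f k.
Proof.
move=> kn m_ge0; have := f_gt0 kn; have := q_ge0 kn => qk fk.
apply: divr_ge0; last exact: ltW.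
by apply: mulr_ge0; [exact: sqr_ge0 | nra].
Qed.

(* The left side vanishes iff every [q k * f k] equals [\sum q / T]. *)
Lemma cube_sum_gap :
  \sum_(k < n) (q k * f k - (\sum_(j < n) q j) / T) ^+ 2 *
      (q k * f k + 2 * ((\sum_(j < n) q j) / T)) / f k
  <= \sum_(k < n) q k ^+ 3 * f k ^+ 2 - (\sum_(j < n) q j) ^+ 3 / T ^+ 2.
Proof.
set S := \sum_(j < n) q j; set m := S / T.
have m_ge0 : 0 <= m.
  by apply: divr_ge0; [apply: sumr_ge0 => k _; exact: q_ge0 | exact: ltW].
have -> : \sum_(k < n) (q k * f k - m) ^+ 2 * (q k * f k + 2 * m) / f k =
    \sum_(k < n) q k ^+ 3 * f k ^+ 2 - 3 * m ^+ 2 * S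
      + 2 * m ^+ 3 * \sum_(k < n) 1 / f k.
  rewrite /S !mulr_sumr -sumrB -big_split /=; apply: eq_bigr => k _.
  by field; exact: lt0r_neq0 (f_gt0 (ltn_ord k)).
have : 2 * m ^+ 3 * \sum_(k < n) 1 / f k <= 2 * m ^+ 3 * T.
  by apply: ler_wpM2l => //; apply: mulr_ge0 => //; exact: exprn_ge0.
have -> : 2 * m ^+ 3 * T = 3 * m ^+ 2 * S - S ^+ 3 / T ^+ 2.
  by rewrite /m; field; exact: lt0r_neq0.
lra.
Qed.

Lemma cube_sum_le :
  (\sum_(k < n) q k) ^+ 3 / T ^+ 2 <= \sum_(k < n) q k ^+ 3 * f k ^+ 2.
Proof.
have : 0 <= \sum_(k < n) (q k * f k - (\sum_(j < n) q j) / T) ^+ 2 *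
      (q k * f k + 2 * ((\sum_(j < n) q j) / T)) / f k.
  apply: sumr_ge0 => k _; apply: cube_sum_gap_ge0 => //.
  by apply: divr_ge0; [apply: sumr_ge0 => j _; exact: q_ge0 | exact: ltW].
have := cube_sum_gap; lra.
Qed.

Lemma cube_sum_eq_cst :
  \sum_(k < n) q k ^+ 3 * f k ^+ 2 <= (\sum_(k < n) q k) ^+ 3 / T ^+ 2 ->
  forall k, (k < n)%N -> q k * f k = (\sum_(j < n) q j) / T.
Proof.
set m := (\sum_(j < n) q j) / T => sum_le k kn.
have m_ge0 : 0 <= m.
  by apply: divr_ge0; [apply: sumr_ge0 => j _; exact: q_ge0 | exact: ltW].
have gap0 : \sum_(j < n) (q j * f j - m) ^+ 2 * (q j * f j + 2 * m) / f j = 0.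
  apply/eqP; rewrite eq_le; apply/andP; split; first by have := cube_sum_gap; lra.
  by apply: sumr_ge0 => j _; exact: cube_sum_gap_ge0.
have /eqP := (psumr_eq0P (fun j _ => cube_sum_gap_ge0 (ltn_ord j) m_ge0) gap0) (Ordinal kn) isT.
have := f_gt0 kn; have := q_ge0 kn => qk fk.
rewrite /= mulf_eq0 invr_eq0 (gt_eqF fk) orbF mulf_eq0 sqrf_eq0 subr_eq0.
case/orP => [/eqP //|/eqP qfm0]; nra.
Qed.

End CubeSum.

Section Mixture.
Variables (R : realFieldType) (n : nat).

Lemma div1_convex (t a b : R) : 0 <= t <= 1 -> 0 < a -> 0 < b ->
  1 / ((1 - t) * a + t * b) <= (1 - t) * (1 / a) + t * (1 / b).
Proof.
move=> /andP[t_ge0 t_le1] a_gt0 b_gt0.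
have mix_gt0 : 0 < (1 - t) * a + t * b.
  have : 0 <= (1 - t) * a by apply: mulr_ge0; lra.
  have : 0 <= t * b by apply: mulr_ge0; lra.
  nra.
have -> : (1 - t) * (1 / a) + t * (1 / b) = 1 / ((1 - t) * a + t * b)
    + t * (1 - t) * (a - b) ^+ 2 / (a * b * ((1 - t) * a + t * b)).
  by field; rewrite !lt0r_neq0.
rewrite lerDl; apply: divr_ge0; last by rewrite !mulr_ge0 // ltW.
by rewrite mulr_ge0 ?sqr_ge0 // mulr_ge0 // subr_ge0.
Qed.

Lemma sum_mul_sqr_mix (u f g : nat -> R) (t : R) :
  \sum_(k < n) u k * ((1 - t) * f k + t * g k) ^+ 2 =
  (1 - t) * \sum_(k < n) u k * f k ^+ 2 + t * \sum_(k < n) u k * g k ^+ 2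
    - t * (1 - t) * \sum_(k < n) u k * (f k - g k) ^+ 2.
Proof.
rewrite !mulr_sumr -big_split -sumrB.
by apply: eq_bigr => k _ /=; ring.
Qed.

End Mixture.

Section CubeRootMoment.
Variables (R : realType) (n : nat).

Definition sum_cbrt (w : nat -> R) := \sum_(k < n) powR (w k) (1/3).

Definition cbrt_moment (w : nat -> R) :=
  sum_cbrt w ^+ 2 * \sum_(k < n) powR (w k) (-(2/3)).

Lemma cbrt_moment_le (w : nat -> R) (lo hi : R) : 0 < lo -> lo <= hi ->
  (forall k, (k < n)%N -> lo <= w k <= hi) -> cbrt_moment w <= n%:R ^+ 3 * (hi / lo).
Proof.
move=> lo_gt0 lo_hi w_in.
set u := powR hi (1/3); set v := powR lo (1/3).
have v_gt0 : 0 < v by exact: powR_gt0.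
have u_ge_v : v <= u by apply: ge0_ler_powR; rewrite ?nnegrE; lra.
have cbrt_in k : (k < n)%N -> v <= powR (w k) (1/3) <= u.
  move=> kn; have /andP[lo_w w_hi] := w_in k kn.
  by apply/andP; split; apply: ge0_ler_powR; rewrite ?nnegrE //; lra.
have sum_le : sum_cbrt w <= n%:R * u.
  have -> : n%:R * u = \sum_(k < n) u by rewrite sumr_const card_ord mulr_natl.
  apply: ler_sum => k _.
  by case/andP: (cbrt_in k (ltn_ord k)).
have sumN_le : \sum_(k < n) powR (w k) (-(2/3)) <= n%:R * (v ^+ 2)^-1.
  have -> : n%:R * (v ^+ 2)^-1 = \sum_(k < n) (v ^+ 2)^-1.
    by rewrite sumr_const card_ord mulr_natl.
  apply: ler_sum => k _.
  have /andP[v_le _] := cbrt_in k (ltn_ord k).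
  rewrite powRN23 lef_pV2 ?posrE ?exprn_gt0 //; last exact: lt_le_trans v_le.
  by apply: lerXn2r; rewrite // nnegrE ?powR_ge0 ?ltW.
have sum_ge0 : 0 <= sum_cbrt w by apply: sumr_ge0 => k _; exact: powR_ge0.
apply: (le_trans (ler_pM (exprn_ge0 _ sum_ge0)
  (sumr_ge0 _ (fun k _ => powR_ge0 _ _)) (lerXn2r _ _ _ sum_le) sumN_le));
  rewrite ?nnegrE //; first by apply: mulr_ge0; [exact: ler0n | lra].
have -> : hi / lo = u ^+ 3 / v ^+ 3 by rewrite !powR13_expr3 //; lra.
have -> : (n%:R * u) ^+ 2 * (n%:R / v ^+ 2) = n%:R ^+ 3 * (u ^+ 2 / v ^+ 2).
  by field; exact: lt0r_neq0.
apply: ler_wpM2l; first exact: exprn_ge0.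
have -> : u ^+ 3 / v ^+ 3 = u ^+ 2 / v ^+ 2 + u ^+ 2 * (u - v) / v ^+ 3.
  by field; exact: lt0r_neq0.
rewrite lerDl; apply: divr_ge0; last exact: exprn_ge0 (ltW v_gt0).
by apply: mulr_ge0; [exact: sqr_ge0 | lra].
Qed.

Lemma continuous_cbrt_moment_shift (w : nat -> R) (x : R) :
  (forall k, (k < n)%N -> 0 < w k + x) ->
  {for x, continuous (fun l => cbrt_moment (fun k => w k + l))}.
Proof.
move=> wx_gt0.
have sum_cont r : {for x, continuous (fun l => \sum_(k < n) powR (w k + l) r)}.
  apply: cvg_big => [|k _]; first exact: add_continuous.
  exact: continuous_powR_shift (wx_gt0 _ (ltn_ord k)).
set S := fun l => \sum_(k < n) powR (w k + l) (1/3).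
have -> : (fun l => cbrt_moment (fun k => w k + l)) =
    (S \* S) \* (fun l => \sum_(k < n) powR (w k + l) (-(2/3))).
  by apply/funext => l; rewrite /cbrt_moment /sum_cbrt /= expr2.
by apply: cvgM; first apply: cvgM; exact: sum_cont.
Qed.

Lemma cbrt_moment_shift_solvable (w : nat -> R) (M G : R) : (0 < n)%N ->
  (forall k, (k < n)%N -> 0 < w k <= M) -> n%:R ^+ 3 < G ->
  G < cbrt_moment w -> exists2 lam, 0 < lam & cbrt_moment (fun k => w k + lam) = G.
Proof.
move=> n_gt0 w_in G_gt G_lt.
have M_gt0 : 0 < M by case/andP: (w_in 0%N n_gt0); exact: lt_le_trans.
(* By [cbrt_moment_le] the moment at [L] is at most [n^3 (1 + M / L)], which is
   halfway between [n^3] and [G]. *)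
set L := 2 * n%:R ^+ 3 * M / (G - n%:R ^+ 3).
have n3_gt0 : 0 < n%:R ^+ 3 :> R by rewrite exprn_gt0 // ltr0n.
have L_gt0 : 0 < L by apply: divr_gt0; [apply: mulr_gt0 => //; apply: mulr_gt0 | lra].
have moment_L : cbrt_moment (fun k => w k + L) < G.
  apply: (le_lt_trans (cbrt_moment_le (lo := L) (hi := M + L) L_gt0 _ _)).
  - lra.
  - by move=> k /w_in /andP[wk_gt0 wk_le]; apply/andP; split; lra.
  have -> : n%:R ^+ 3 * ((M + L) / L) = n%:R ^+ 3 + (G - n%:R ^+ 3) / 2.
    rewrite /L; field.
    apply/and3P; split; [by rewrite subr_eq0 gt_eqF | exact: lt0r_neq0 |].
    by rewrite pnatr_eq0 -lt0n.
  lra.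
have moment_cont : {within `[0, L], continuous (fun l => cbrt_moment (fun k => w k + l))}.
  apply: continuous_in_subspaceT => x; rewrite inE /= in_itv /= => /andP[x_ge0 _].
  apply: continuous_cbrt_moment_shift => k /w_in /andP[wk_gt0 _]; lra.
have [lam] : exists2 lam, lam \in `[0, L] & cbrt_moment (fun k => w k + lam) = G.
  apply: IVT (ltW L_gt0) moment_cont _.
  rewrite ge_min le_max; under eq_fun do rewrite addr0.
  by rewrite (ltW moment_L) (ltW G_lt) orbT.
rewrite in_itv /= => /andP[lam_ge0 _] moment_lam; exists lam => //.
rewrite lt_def lam_ge0 andbT; apply: contraTneq G_lt => lam0.
by rewrite -moment_lam lam0; under eq_fun do rewrite addr0; rewrite ltxx.
Qed.

End CubeRootMoment.

Section ProblemP3.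
Variables (R : realType) (N : nat) (gamma upsilon T : R) (p : nat -> R).
Hypotheses (N_gt0 : (0 < N)%N) (gamma_gt0 : 0 < gamma) (upsilon_gt0 : 0 < upsilon)
  (T_gt0 : 0 < T) (p_gt0 : forall k, (k < N)%N -> 0 < p k).

Local Notation E c := (E_loc_opt N gamma upsilon c T p).
Local Notation objective := (P3_objective N gamma p).

Definition energy (f : nat -> R) := \sum_(k < N) gamma * f k ^+ 2.

Definition admissible (c : R) (f : nat -> R) : Prop :=
  [/\ forall k, (k < N)%N -> 0 < f k, \sum_(k < N) 1 / f k <= T &
      energy f <= upsilon * c * T].

(* Spread the slack of [\sum 1 / f k <= T] evenly over the times [y k]. *)
Lemma P3_feasibleP c f : 0 <= c ->
  (exists y, P3_feasible N gamma upsilon c T f y) <-> admissible c f.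
Proof.
move=> c_ge0; split=> [[y [energy_le [sum_y f_y]]]|[f_gt0 sum_inv energy_le]].
  have sum_inv_le : \sum_(k < N) 1 / f k <= \sum_(k < N) y k.
    by apply: ler_sum => k _; case: (f_y _ (ltn_ord k)); lra.
  split; first by move=> k /f_y[].
    exact: le_trans sum_y.
  apply: (le_trans energy_le); rewrite ler_wpM2l ?mulr_ge0 //; exact: ltW.
have N_neq0 : (N%:R : R) != 0 by rewrite pnatr_eq0 -lt0n.
set d := (T - \sum_(k < N) 1 / f k) / N%:R.
have d_ge0 : 0 <= d by apply: divr_ge0; [lra | exact: ler0n].
have sum_y : \sum_(k < N) (1 / f k + d) = T.
  by rewrite big_split /= sumr_const card_ord -mulr_natr /d; field.
exists (fun k => 1 / f k + d); split; first by rewrite sum_y.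
split; first by rewrite sum_y.
by move=> k kN; split; [exact: f_gt0 | lra].
Qed.

Lemma objectiveE f : objective f = gamma * \sum_(k < N) p k * f k ^+ 2.
Proof. by rewrite mulr_sumr; apply: eq_bigr => k _; rewrite mulrA. Qed.

Lemma objective_ge0 f : 0 <= objective f.
Proof.
rewrite objectiveE; apply: mulr_ge0; first exact: ltW.
by apply: sumr_ge0 => k _; rewrite mulr_ge0 ?sqr_ge0 // ltW ?p_gt0.
Qed.

Lemma E_loc_opt_le c f : 0 <= c -> admissible c f -> E c <= objective f.
Proof.
move=> c_ge0 /(P3_feasibleP f c_ge0)[y f_y]; apply: ge_inf; last by exists f, y.
by exists 0 => e [g [z [_ ->]]]; exact: objective_ge0.
Qed.

Lemma E_loc_opt_ge c e : 0 <= c -> (exists f, admissible c f) ->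
  (forall f, admissible c f -> e <= objective f) -> e <= E c.
Proof.
move=> c_ge0 [f /(P3_feasibleP f c_ge0)[y f_y]] e_le; apply: lb_le_inf.
  by exists (objective f), f, y.
move=> _ [g [z [g_z ->]]]; apply: e_le; apply/(P3_feasibleP g c_ge0); by exists z.
Qed.

Lemma E_loc_opt_min c f : 0 <= c -> admissible c f ->
  (forall g, admissible c g -> objective f <= objective g) -> E c = objective f.
Proof.
move=> c_ge0 f_adm f_min; apply/le_anti/andP; split; first exact: E_loc_opt_le.
by apply: E_loc_opt_ge => //; exists f.
Qed.

Lemma admissible_le c c' f : c <= c' -> admissible c f -> admissible c' f.
Proof.
move=> c_le [f_gt0 sum_inv energy_le]; split => //.
by apply: (le_trans energy_le); rewrite ler_pM2r // ler_pM2l.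
Qed.

(* The minimiser of [\sum w k * f k ^+ 2] under [\sum 1 / f k <= T]:
   [f k] proportional to [w k ^ (-1/3)]. *)
Definition freq_opt (w : nat -> R) k := sum_cbrt N w / (T * powR (w k) (1/3)).

Section OptimalProfile.
Variable w : nat -> R.
Hypothesis w_gt0 : forall k, (k < N)%N -> 0 < w k.

Let cbrt_gt0 k : (k < N)%N -> 0 < powR (w k) (1/3).
Proof. by move=> kN; exact/powR_gt0/w_gt0. Qed.

Lemma sum_cbrt_gt0 : 0 < sum_cbrt N w.
Proof.
rewrite /sum_cbrt (bigD1 (Ordinal N_gt0)) //=.
have := cbrt_gt0 N_gt0.
have : 0 <= \sum_(k < N | k != Ordinal N_gt0) powR (w k) (1/3).
  by apply: sumr_ge0 => k _; exact: powR_ge0.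
lra.
Qed.

Lemma freq_opt_gt0 k : (k < N)%N -> 0 < freq_opt w k.
Proof.
by move=> kN; rewrite divr_gt0 ?sum_cbrt_gt0 // mulr_gt0 ?cbrt_gt0.
Qed.

Lemma sum_inv_freq_opt : \sum_(k < N) 1 / freq_opt w k = T.
Proof.
have S_neq0 := lt0r_neq0 sum_cbrt_gt0.
rewrite (eq_bigr (fun k : 'I_N => T / sum_cbrt N w * powR (w k) (1/3))).
  by rewrite -mulr_sumr -/(sum_cbrt N w); field.
move=> k _; rewrite /freq_opt; field.
by rewrite S_neq0 !lt0r_neq0 ?cbrt_gt0 ?ltn_ord.
Qed.

Lemma sum_mul_freq_opt_sqr (u : nat -> R) :
  \sum_(k < N) u k * freq_opt w k ^+ 2 =
  sum_cbrt N w ^+ 2 / T ^+ 2 * \sum_(k < N) u k * powR (w k) (-(2/3)).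
Proof.
rewrite mulr_sumr; apply: eq_bigr => k _.
rewrite /freq_opt powRN23; field.
by rewrite !lt0r_neq0 ?cbrt_gt0 ?ltn_ord.
Qed.

Lemma sum_weight_freq_opt_sqr :
  \sum_(k < N) w k * freq_opt w k ^+ 2 = sum_cbrt N w ^+ 3 / T ^+ 2.
Proof.
rewrite sum_mul_freq_opt_sqr (eq_bigr (fun k : 'I_N => powR (w k) (1/3))).
  by rewrite -/(sum_cbrt N w); field; exact: lt0r_neq0.
move=> k _; rewrite powRN23 -{1}[w k]powR13_expr3 ?ltW ?w_gt0 //.
by field; rewrite lt0r_neq0 ?cbrt_gt0 ?ltn_ord.
Qed.

Lemma sum_weight_sqr_ge f : (forall k, (k < N)%N -> 0 < f k) ->
  \sum_(k < N) 1 / f k <= T ->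
  sum_cbrt N w ^+ 3 / T ^+ 2 <= \sum_(k < N) w k * f k ^+ 2.
Proof.
move=> f_gt0 sum_inv.
have -> : \sum_(k < N) w k * f k ^+ 2 =
    \sum_(k < N) powR (w k) (1/3) ^+ 3 * f k ^+ 2.
  by apply: eq_bigr => k _; rewrite powR13_expr3 ?ltW ?w_gt0.
exact: cube_sum_le T_gt0 (fun k kN => ltW (cbrt_gt0 kN)) f_gt0 sum_inv.
Qed.

Lemma energy_freq_opt : energy (freq_opt w) = gamma / T ^+ 2 * cbrt_moment N w.
Proof.
rewrite /energy (sum_mul_freq_opt_sqr (fun=> gamma)) -mulr_sumr /cbrt_moment.
by field; exact: lt0r_neq0.
Qed.

Lemma objective_freq_opt : objective (freq_opt w) =
  gamma / T ^+ 2 * sum_cbrt N w ^+ 2 * \sum_(k < N) p k * powR (w k) (-(2/3)).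
Proof.
rewrite objectiveE sum_mul_freq_opt_sqr.
by field; exact: lt0r_neq0.
Qed.

End OptimalProfile.

Local Notation a := (a_thr N gamma upsilon T).
Local Notation a' := (a'_thr N gamma upsilon T p).

Lemma a_thr_gt0 : 0 < a.
Proof.
have natrN_gt0 : (0 : R) < N%:R by rewrite ltr0n.
by rewrite /a_thr divr_gt0 ?mulr_gt0 ?exprn_gt0.
Qed.

Lemma cbrt_moment_p : cbrt_moment N p = upsilon * a' * T ^+ 3 / gamma.
Proof. by rewrite /a'_thr /cbrt_moment /sum_cbrt; field; rewrite !lt0r_neq0. Qed.

Lemma natr_cube_a : N%:R ^+ 3 = upsilon * a * T ^+ 3 / gamma.
Proof. by rewrite /a_thr; field; rewrite !lt0r_neq0. Qed.

Lemma energy_freq_opt_p : energy (freq_opt p) = upsilon * a' * T.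
Proof. by rewrite energy_freq_opt // cbrt_moment_p; field; rewrite !lt0r_neq0. Qed.

Lemma objective_freq_opt_p :
  objective (freq_opt p) = gamma / T ^+ 2 * sum_cbrt N p ^+ 3.
Proof. by rewrite objectiveE sum_weight_freq_opt_sqr // mulrCA mulrC. Qed.

Lemma objective_freq_opt_le f : (forall k, (k < N)%N -> 0 < f k) ->
  \sum_(k < N) 1 / f k <= T -> objective (freq_opt p) <= objective f.
Proof.
move=> f_gt0 sum_inv; rewrite !objectiveE ler_pM2l //.
by rewrite sum_weight_freq_opt_sqr //; exact: sum_weight_sqr_ge.
Qed.

Lemma E_loc_opt_ge_cube c : 0 <= c -> (exists f, admissible c f) ->
  gamma / T ^+ 2 * sum_cbrt N p ^+ 3 <= E c.
Proof.
move=> c_ge0 f_adm; apply: E_loc_opt_ge => // f [f_gt0 sum_inv _].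
by rewrite -objective_freq_opt_p; exact: objective_freq_opt_le.
Qed.

Lemma E_loc_opt_above c : a' <= c -> E c = gamma / T ^+ 2 * sum_cbrt N p ^+ 3.
Proof.
move=> a'_le_c; rewrite -objective_freq_opt_p.
have c_ge0 : 0 <= c.
  apply: le_trans a'_le_c; rewrite /a'_thr.
  apply: mulr_ge0; last by apply: sumr_ge0 => k _; exact: powR_ge0.
  by rewrite mulr_ge0 ?sqr_ge0 // divr_ge0 ?mulr_ge0 ?exprn_ge0 ?ltW.
apply: E_loc_opt_min => // [|g [g_gt0 sum_inv _]]; last exact: objective_freq_opt_le.
split; [exact: freq_opt_gt0 | by rewrite sum_inv_freq_opt |].
by rewrite energy_freq_opt_p ler_pM2r // ler_pM2l.
Qed.

(* Lagrangian with multiplier [lam] for the energy constraint. *)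
Lemma objective_shift lam f :
  objective f = gamma * \sum_(k < N) (p k + lam) * f k ^+ 2 - lam * energy f.
Proof. by rewrite !mulr_sumr -sumrB; apply: eq_bigr => k _; ring. Qed.

Lemma E_loc_opt_shift c lam : 0 <= c -> 0 < lam ->
  cbrt_moment N (fun k => p k + lam) = upsilon * c * T ^+ 3 / gamma ->
  admissible c (freq_opt (fun k => p k + lam)) /\
  E c = objective (freq_opt (fun k => p k + lam)).
Proof.
set w := fun k => p k + lam => c_ge0 lam_gt0 moment_eq.
have w_gt0 k : (k < N)%N -> 0 < w k by move=> kN; rewrite addr_gt0 ?p_gt0.
have energy_eq : energy (freq_opt w) = upsilon * c * T.
  by rewrite energy_freq_opt // moment_eq; field; rewrite !lt0r_neq0.
have fw_adm : admissible c (freq_opt w).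
  by split; [exact: freq_opt_gt0 | rewrite sum_inv_freq_opt | rewrite energy_eq].
split=> //; apply: E_loc_opt_min => // g [g_gt0 sum_inv energy_le].
rewrite !(objective_shift lam) energy_eq sum_weight_freq_opt_sqr //.
have := sum_weight_sqr_ge w_gt0 g_gt0 sum_inv.
have := ler_wpM2l (ltW lam_gt0) energy_le.
have gamma_ge0 := ltW gamma_gt0.
nra.
Qed.

Lemma admissible_a : admissible a (fun=> N%:R / T).
Proof.
have N_neq0 : (N%:R : R) != 0 by rewrite pnatr_eq0 -lt0n.
split; first by move=> k _; rewrite divr_gt0 ?ltr0n.
  have -> : \sum_(k < N) 1 / (N%:R / T) = T.
    by rewrite sumr_const card_ord -mulr_natr; field; rewrite N_neq0 lt0r_neq0.
  exact: lexx.
have -> : energy (fun=> N%:R / T) = upsilon * a * T.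
  by rewrite /energy sumr_const card_ord -mulr_natr /a_thr; field; rewrite !lt0r_neq0.
exact: lexx.
Qed.

(* At [c = a] the energy budget forces equality in [cube_sum_le] for unit weights. *)
Lemma E_loc_opt_a : E a = objective (fun=> N%:R / T).
Proof.
apply: (E_loc_opt_min (ltW a_thr_gt0) admissible_a) => g [g_gt0 sum_inv energy_le].
have sum1 : \sum_(k < N) (1 : R) = N%:R by rewrite sumr_const card_ord.
have g_eq : forall k, (k < N)%N -> 1 * g k = (\sum_(j < N) (1 : R)) / T.
  apply: (cube_sum_eq_cst (q := fun=> 1) T_gt0 (fun _ _ => ler01) g_gt0 sum_inv).
  rewrite sum1; under eq_bigr do rewrite /= expr1n mul1r.
  rewrite -(@ler_pM2l _ gamma) // mulr_sumr (le_trans energy_le) //.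
  by rewrite /a_thr le_eqVlt; apply/orP; left; apply/eqP; field; rewrite !lt0r_neq0.
rewrite le_eqVlt; apply/orP; left; apply/eqP/eq_bigr => k _.
by rewrite -sum1 -(g_eq _ (ltn_ord k)) mul1r.
Qed.

Lemma objective_cst : objective (fun=> N%:R / T) =
  gamma * N%:R ^+ 2 / T ^+ 2 * \sum_(k < N) p k.
Proof.
rewrite objectiveE !mulr_sumr; apply: eq_bigr => k _.
by field; exact: lt0r_neq0.
Qed.

Definition mix (t : R) (f g : nat -> R) k := (1 - t) * f k + t * g k.

Lemma admissible_mix c c' f g t : 0 <= t <= 1 ->
  admissible c f -> admissible c' g -> admissible ((1 - t) * c + t * c') (mix t f g).
Proof.
move=> t01 [f_gt0 f_inv f_energy] [g_gt0 g_inv g_energy].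
have /andP[t_ge0 t_le1] := t01.
have t'_ge0 : 0 <= 1 - t by rewrite subr_ge0.
split.
- move=> k kN; have := f_gt0 _ kN; have := g_gt0 _ kN => gk fk; rewrite /mix.
  have [-> | t_neq0] := eqVneq t 0; first by rewrite subr0 mul0r mul1r addr0.
  have : 0 < t * g k by rewrite mulr_gt0 // lt_def t_neq0.
  have : 0 <= (1 - t) * f k by rewrite mulr_ge0 // ltW.
  lra.
- apply: le_trans (ler_sum _ (fun k _ => div1_convex t01 (f_gt0 _ (ltn_ord k))
    (g_gt0 _ (ltn_ord k)))) _.
  rewrite big_split /= -(mulr_sumr _ _ _ (1 - t)) -(mulr_sumr _ _ _ t).
  have := ler_wpM2l t_ge0 g_inv; have := ler_wpM2l t'_ge0 f_inv; lra.
- rewrite /energy /mix (sum_mul_sqr_mix _ (fun=> gamma)).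
  have : 0 <= t * (1 - t) * \sum_(k < N) gamma * (f k - g k) ^+ 2.
    rewrite !mulr_ge0 //; apply: sumr_ge0 => k _.
    by rewrite mulr_ge0 ?sqr_ge0 ?ltW.
  have := ler_wpM2l t_ge0 g_energy; have := ler_wpM2l t'_ge0 f_energy.
  rewrite /energy; lra.
Qed.

Lemma sum_sqr_dist_gt0 f g : energy f != energy g ->
  0 < \sum_(k < N) gamma * p k * (f k - g k) ^+ 2.
Proof.
move=> energy_neq.
have dist_ge0 (k : 'I_N) : true -> 0 <= gamma * p k * (f k - g k) ^+ 2.
  by rewrite mulr_ge0 ?sqr_ge0 // mulr_ge0 ?ltW ?p_gt0.
rewrite lt_def sumr_ge0 // andbT; apply: contraNneq energy_neq.
move=> /(psumr_eq0P dist_ge0) dist0; apply/eqP/eq_bigr => k _.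
have /eqP := dist0 k isT; rewrite mulf_eq0 sqrf_eq0 mulf_eq0 subr_eq0.
by rewrite (gt_eqF gamma_gt0) (gt_eqF (p_gt0 (ltn_ord k))) => /eqP ->.
Qed.

(* Moving part of the way from an optimum [f1] at [c1] towards the unconstrained
   minimiser [freq_opt p] (admissible at [a']) strictly lowers the objective. *)
Lemma E_loc_opt_decreasing c1 c2 f1 : 0 <= c1 -> c1 < c2 -> c2 < a' ->
  admissible c1 f1 -> E c1 = objective f1 -> E c2 < E c1.
Proof.
move=> c1_ge0 c1_lt_c2 c2_lt_a' f1_adm E_c1.
have c1_lt_a' := lt_trans c1_lt_c2 c2_lt_a'.
set fp := freq_opt p; set t := (c2 - c1) / (a' - c1).
have t_gt0 : 0 < t by rewrite divr_gt0 // subr_gt0.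
have t_lt1 : t < 1 by rewrite ltr_pdivrMr ?subr_gt0 //; lra.
have fp_adm : admissible a' fp.
  split; [exact: freq_opt_gt0 | by rewrite sum_inv_freq_opt |].
  by rewrite energy_freq_opt_p.
have mix_adm : admissible c2 (mix t f1 fp).
  have -> : c2 = (1 - t) * c1 + t * a'.
    by rewrite /t; field; rewrite subr_eq0 gt_eqF.
  by apply: admissible_mix => //; rewrite !ltW.
have [f1_gt0 f1_inv f1_energy] := f1_adm.
have fp_le_f1 := objective_freq_opt_le f1_gt0 f1_inv.
set D := \sum_(k < N) gamma * p k * (f1 k - fp k) ^+ 2.
have D_gt0 : 0 < D.
  apply: sum_sqr_dist_gt0; apply: contraTneq f1_energy => ->.
  by rewrite energy_freq_opt_p -ltNge ltr_pM2r // ltr_pM2l.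
have tD_gt0 : 0 < t * (1 - t) * D by rewrite mulr_gt0 // mulr_gt0 // subr_gt0.
have obj_mix : objective (mix t f1 fp) =
    (1 - t) * objective f1 + t * objective fp - t * (1 - t) * D.
  exact: (sum_mul_sqr_mix _ (fun k => gamma * p k)).
apply: le_lt_trans (E_loc_opt_le (ltW (le_lt_trans c1_ge0 c1_lt_c2)) mix_adm) _.
rewrite obj_mix E_c1; nra.
Qed.

Section BoundedWeights.
Hypothesis p_le1 : forall k, (k < N)%N -> p k <= 1.

Lemma cbrt_moment_solvable c : a < c -> c < a' ->
  exists2 lam, 0 < lam &
    cbrt_moment N (fun k => p k + lam) = upsilon * c * T ^+ 3 / gamma.
Proof.
have scale_lt x y : x < y -> upsilon * x * T ^+ 3 / gamma < upsilon * y * T ^+ 3 / gamma.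
  by move=> x_lt_y; rewrite ltr_pM2r ?invr_gt0 // ltr_pM2r ?exprn_gt0 // ltr_pM2l.
move=> a_lt_c c_lt_a'; apply: (cbrt_moment_shift_solvable (M := 1)) => //.
- by move=> k kN; rewrite p_gt0 ?p_le1.
- by rewrite natr_cube_a scale_lt.
- by rewrite cbrt_moment_p scale_lt.
Qed.

Lemma E_loc_opt_attained c : a <= c -> c < a' ->
  exists f, admissible c f /\ E c = objective f.
Proof.
move=> a_le_c c_lt_a'; have c_ge0 := le_trans (ltW a_thr_gt0) a_le_c.
have [<-|c_neq_a] := eqVneq a c.
  by exists (fun=> N%:R / T); split; [exact: admissible_a | exact: E_loc_opt_a].
have a_lt_c : a < c by rewrite lt_def eq_sym c_neq_a.
have [lam lam_gt0 moment_eq] := cbrt_moment_solvable a_lt_c c_lt_a'.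
by exists (freq_opt (fun k => p k + lam)); exact: E_loc_opt_shift.
Qed.

Lemma E_loc_opt_ltr c1 c2 : a <= c1 -> c1 < c2 -> c2 < a' -> E c2 < E c1.
Proof.
move=> a_le_c1 c1_lt_c2 c2_lt_a'; have c1_ge0 := le_trans (ltW a_thr_gt0) a_le_c1.
have [f1 [f1_adm E_c1]] := E_loc_opt_attained a_le_c1 (lt_trans c1_lt_c2 c2_lt_a').
exact: E_loc_opt_decreasing c1_ge0 c1_lt_c2 c2_lt_a' f1_adm E_c1.
Qed.

Lemma E_loc_opt_bounds c : a <= c -> c < a' ->
  gamma / T ^+ 2 * sum_cbrt N p ^+ 3 < E c /\
  E c <= gamma * N%:R ^+ 2 / T ^+ 2 * \sum_(k < N) p k.
Proof.
move=> a_le_c c_lt_a'; have c_ge0 := le_trans (ltW a_thr_gt0) a_le_c.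
have cst_adm := admissible_le a_le_c admissible_a.
split; last by rewrite -objective_cst; exact: E_loc_opt_le.
set c' := (c + a') / 2.
have [c_lt_c' c'_lt_a'] : c < c' /\ c' < a' by rewrite /c'; split; lra.
apply: le_lt_trans (E_loc_opt_ltr a_le_c c_lt_c' c'_lt_a').
apply: E_loc_opt_ge_cube; first lra.
by exists (fun=> N%:R / T); exact: admissible_le (ltW c_lt_c') cst_adm.
Qed.

End BoundedWeights.

End ProblemP3.

Lemma decreasing_bounded (R : realType) (N : nat) (p : nat -> R) :
  (forall i j, (i < j)%N -> (j < N)%N -> p j < p i) -> 0 < p N.-1 -> p 0%N <= 1 ->
  (forall k, (k < N)%N -> 0 < p k) /\ (forall k, (k < N)%N -> p k <= 1).
Proof.
move=> p_decr pN_gt0 p0_le1; split=> k kN.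
  have [k_lt|k_ge] := ltnP k N.-1; last by rewrite (_ : k = N.-1) //; lia.
  by apply: lt_trans pN_gt0 (p_decr _ _ k_lt _); lia.
by case: k kN => [//|k] kN; exact: le_trans (ltW (p_decr _ _ _ kN)) p0_le1.
Qed.

Theorem corollary1 (R : realType) (N : nat) (gamma upsilon Pb h T : R)
  (p : nat -> R) :
  (2 <= N)%N -> 0 < gamma -> 0 < upsilon -> upsilon <= 1 ->
  0 < Pb -> 0 < h -> 0 < T ->
  (forall i j, (i < j)%N -> (j < N)%N -> p j < p i) ->
  0 < p N.-1 -> p 0%N <= 1 ->
  let a := a_thr N gamma upsilon T in
  let a' := a'_thr N gamma upsilon T p in
  let E := E_loc_opt N gamma upsilon (Pb * h) T p in
  (* (1) *)
  (a < Pb * h < a' ->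
     (exists lam : R, 0 < lam /\
        (\sum_(k < N) powR (p k + lam) (1/3)) ^+ 2
          * (\sum_(k < N) powR (p k + lam) (-(2/3)))
        = upsilon * Pb * h * T ^+ 3 / gamma) /\
     (forall lam : R, 0 < lam ->
        (\sum_(k < N) powR (p k + lam) (1/3)) ^+ 2
          * (\sum_(k < N) powR (p k + lam) (-(2/3)))
        = upsilon * Pb * h * T ^+ 3 / gamma ->
        E = gamma / T ^+ 2 * (\sum_(k < N) powR (p k + lam) (1/3)) ^+ 2
              * (\sum_(k < N) p k * powR (p k + lam) (-(2/3))))) /\
  (Pb * h = a -> E = gamma * (N%:R) ^+ 2 / T ^+ 2 * \sum_(k < N) p k) /\
  (forall c1 c2 : R, a <= c1 -> c1 < c2 -> c2 < a' ->
     E_loc_opt N gamma upsilon c2 T p < E_loc_opt N gamma upsilon c1 T p) /\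
  (a <= Pb * h < a' ->
     gamma / T ^+ 2 * (\sum_(k < N) powR (p k) (1/3)) ^+ 3 < E /\
     E <= gamma * (N%:R) ^+ 2 / T ^+ 2 * \sum_(k < N) p k) /\
  (* (2) *)
  (a' <= Pb * h -> E = gamma / T ^+ 2 * (\sum_(k < N) powR (p k) (1/3)) ^+ 3).
Proof.
move=> N_ge2 gamma_gt0 upsilon_gt0 _ Pb_gt0 h_gt0 T_gt0 p_decr pN_gt0 p0_le1 a a' E.
rewrite {}/a {}/a' {}/E.
have N_gt0 : (0 < N)%N by apply: leq_trans N_ge2.
have [p_gt0 p_le1] := decreasing_bounded p_decr pN_gt0 p0_le1.
have c_ge0 : 0 <= Pb * h by rewrite mulr_ge0 ?ltW.
have -> : upsilon * Pb * h = upsilon * (Pb * h) by rewrite mulrA.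
split.
  move=> /andP[a_lt a_gt]; split.
    have [lam] := cbrt_moment_solvable N_gt0 gamma_gt0 upsilon_gt0 T_gt0 p_gt0 p_le1 a_lt a_gt.
    by exists lam.
  move=> lam lam_gt0 /(E_loc_opt_shift N_gt0 gamma_gt0 upsilon_gt0 T_gt0 p_gt0 c_ge0 lam_gt0).
  by case=> _ ->; rewrite objective_freq_opt // => k kN; rewrite addr_gt0 ?p_gt0.
split.
  by move=> ->; rewrite E_loc_opt_a ?objective_cst.
split; first exact: E_loc_opt_ltr.
split; first by case/andP; exact: E_loc_opt_bounds.
exact: E_loc_opt_above.
Qed.
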